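(* Let $P(t,q)=\log\big(\sum_{n=1}^\infty2^{-nt}n^q\big)$ on $D=\{(t,q): t>0,\ \text{or}\ t=0,\ q<-1\}$, let $\tilde D=\{(t,q)\in D:0\le t\le1\}$, and let $\xi_0=\int_0^1\log\lceil-\log_2x\rceil\,dx$. For $\xi>0$ let $(t(\xi),q(\xi))\in\tilde D$ be the unique solution in $\tilde D$ of the system $P(t,q)=q\xi$, $\frac{\partial P}{\partial q}(t,q)=\xi$. Then $q(\xi)<0$ for $0<\xi<\xi_0$, $q(\xi_0)=0$, and $q(\xi)>0$ for $\xi>\xi_0$.
   Context: It is part of the setting (taken from the paper) that for every $\xi>0$ the system has a unique solution in $\tilde D$, that this solution is $(1,0)$ for $\xi=\xi_0$, and that $\frac{\partial P}{\partial q}(1,0)=\xi_0$. *)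

From Stdlib Require Import Reals.
From Coquelicot Require Import Coquelicot.
Open Scope R_scope.

Definition Rceil (x : R) : R := - IZR (Int_part (- x)).

Definition log2 (x : R) : R := ln x / ln 2.

Definition P (t q : R) : R :=
  ln (Series (fun n : nat => Rpower 2 (- (INR (S n)) * t) * Rpower (INR (S n)) q)).

Definition inD (t q : R) : Prop := 0 < t \/ (t = 0 /\ q < -1).

Definition inDtilde (t q : R) : Prop := inD t q /\ 0 <= t <= 1.

Definition xi0_integrand (x : R) : R := ln (Rceil (- log2 x)).

Definition solves (xi t q : R) : Prop :=
  P t q = q * xi /\ is_derive (fun s => P t s) q xi.

(** The function [q |-> P 1 q] is convex (Hölder's inequality), vanishes at
    [q = 0] and has slope [xi_0 > 0] there, so [xi_0 q <= P 1 q] for all [q].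
    Since [P] decreases in [t], a solution [(t, q)] of the system for [xi]
    satisfies [q xi = P t q >= P 1 q >= xi_0 q], which forces the sign of [q]
    as soon as [xi <> xi_0].  If [q = 0], then [P t] touches the line
    [s |-> xi_0 s] at [0], so its slope [xi] there equals [xi_0]; and [(1, 0)]
    solves the system for [xi_0], so uniqueness gives [q(xi_0) = 0]. *)

From Stdlib Require Import Reals Lra Lia Classical.
From Coquelicot Require Import Coquelicot.
Open Scope R_scope.

Lemma exp_le x y : x <= y -> exp x <= exp y.
Proof. intros [Hxy|<-]; [left; now apply exp_increasing | lra]. Qed.


Lemma ln_le x y : 0 < x -> x <= y -> ln x <= ln y.
Proof. intros Hx [Hxy|<-]; [left; now apply ln_increasing | lra]. Qed.


Lemma INR_S_pos n : 0 < INR (S n).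
Proof. apply lt_0_INR. lia. Qed.


Lemma ln2_pos : 0 < ln 2.
Proof. rewrite <- ln_1. apply ln_increasing; lra. Qed.


Definition convex (f : R -> R) : Prop :=
  forall x y s, 0 <= s <= 1 -> f (s * x + (1 - s) * y) <= s * f x + (1 - s) * f y.

Lemma exp_convex : convex exp.
Proof.
  intros u v s Hs. set (m := s * u + (1 - s) * v).
  assert (Hu : exp u = exp m * exp (u - m)) by (rewrite <- exp_plus; f_equal; ring).
  assert (Hv : exp v = exp m * exp (v - m)) by (rewrite <- exp_plus; f_equal; ring).
  assert (H1 := exp_ineq1_le (u - m)). assert (H2 := exp_ineq1_le (v - m)).
  assert (Hm := exp_pos m).
  assert (Hsu : 0 <= s * exp m * (exp (u - m) - (1 + (u - m))))
    by (apply Rmult_le_pos; [apply Rmult_le_pos|]; lra).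
  assert (Hsv : 0 <= (1 - s) * exp m * (exp (v - m) - (1 + (v - m))))
    by (apply Rmult_le_pos; [apply Rmult_le_pos|]; lra).
  assert (Hm0 : s * (u - m) + (1 - s) * (v - m) = 0) by (unfold m; ring).
  rewrite Hu, Hv. nra.
Qed.

Lemma is_derive_le_of_right_slope (h : R -> R) a d c :
  is_derive h a d -> (forall s, 0 < s < 1 -> h (a + s) - h a <= c * s) -> d <= c.
Proof.
  intros Hd Hslope. apply Rnot_lt_le. intros Hcd.
  apply is_derive_Reals in Hd.
  destruct (Hd (d - c) ltac:(lra)) as [del Hdel].
  assert (Hdel0 := cond_pos del).
  set (s := Rmin (1 / 2) (del / 2)).
  assert (Hs0 : 0 < s) by (apply Rmin_glb_lt; lra).
  assert (Hs1 : s <= 1 / 2) by apply Rmin_l.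
  assert (Hs2 : s <= del / 2) by apply Rmin_r.
  specialize (Hdel s ltac:(lra) ltac:(rewrite Rabs_pos_eq; lra)).
  specialize (Hslope s ltac:(lra)).
  apply Rabs_def2 in Hdel.
  assert ((h (a + s) - h a) / s <= c).
  { apply (Rmult_le_reg_r s); [lra|]. unfold Rdiv. rewrite Rmult_assoc, Rinv_l; lra. }
  lra.
Qed.

Lemma is_derive_ge_of_right_slope (h : R -> R) a d c :
  is_derive h a d -> (forall s, 0 < s < 1 -> c * s <= h (a + s) - h a) -> c <= d.
Proof.
  intros Hd Hslope.
  enough (- d <= - c) by lra.
  apply (is_derive_le_of_right_slope (fun x => - h x) a).
  - exact (is_derive_opp _ _ _ Hd).
  - intros s Hs. specialize (Hslope s Hs). lra.
Qed.

Lemma convex_ge_tangent (f : R -> R) a l x :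
  convex f -> is_derive f a l -> f a + l * (x - a) <= f x.
Proof.
  intros Hf Hd.
  set (g := fun s => f (a + s * (x - a))).
  assert (Hg : is_derive g 0 ((x - a) * l)).
  { apply (is_derive_comp f (fun s => a + s * (x - a))).
    - now rewrite Rmult_0_l, Rplus_0_r.
    - auto_derive; [easy | ring]. }
  enough ((x - a) * l <= f x - f a) by lra.
  apply (is_derive_le_of_right_slope g 0); auto.
  intros s Hs. unfold g. rewrite Rplus_0_l, Rmult_0_l, Rplus_0_r.
  replace (a + s * (x - a)) with (s * x + (1 - s) * a) by ring.
  specialize (Hf x a s ltac:(lra)). lra.
Qed.

Lemma is_derive_eq_of_supporting_line (f : R -> R) a l c :
  is_derive f a l -> (forall x, f a + c * (x - a) <= f x) -> l = c.
Proof.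
  intros Hd Hline. apply Rle_antisym.
  - apply (is_derive_le_of_right_slope (fun s => - f (a - s)) 0).
    + replace l with (- 1 * - l) by ring.
      apply (is_derive_comp (fun y => - f y) (fun s => a - s)).
      * rewrite Rminus_0_r. exact (is_derive_opp _ _ _ Hd).
      * auto_derive; [easy | ring].
    + intros s Hs. rewrite Rplus_0_l, Rminus_0_r.
      specialize (Hline (a - s)). lra.
  - apply (is_derive_ge_of_right_slope f a); auto.
    intros s Hs. specialize (Hline (a + s)). lra.
Qed.

Lemma Series_nonneg (a : nat -> R) : ex_series a -> (forall n, 0 <= a n) -> 0 <= Series a.
Proof.
  intros Ha Hnn. rewrite <- (Rmult_0_l (Series a)), <- Series_scal_l.
  apply Series_le; auto. intros n. specialize (Hnn n). lra.
Qed.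

Lemma Series_ge_term (a : nat -> R) k :
  ex_series a -> (forall n, 0 <= a n) -> a k <= Series a.
Proof.
  revert a. induction k as [|k IH]; intros a Ha Hnn;
    assert (Ha1 := proj1 (ex_series_incr_1 a) Ha);
    rewrite Series_incr_1 by exact Ha.
  - assert (Htail := Series_nonneg _ Ha1 (fun n => Hnn (S n))). lra.
  - assert (Htail := IH _ Ha1 (fun n => Hnn (S n))). assert (H0 := Hnn 0%nat). lra.
Qed.

Lemma Series_pos (a : nat -> R) : ex_series a -> (forall n, 0 < a n) -> 0 < Series a.
Proof.
  intros Ha Hpos.
  apply (Rlt_le_trans _ (a 0%nat)); [apply Hpos|].
  apply Series_ge_term; auto. intros n. left. apply Hpos.
Qed.

Lemma Series_not_ex_series (a : nat -> R) :
  (forall n, 0 <= a n) -> ~ ex_series a -> Series a = 0.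
Proof.
  intros Hnn Hdiv. unfold Series.
  assert (Hlim : ex_lim_seq (sum_n a)).
  { apply ex_lim_seq_incr. intros n. rewrite sum_Sn. specialize (Hnn (S n)).
    unfold plus; simpl. lra. }
  apply Lim_seq_correct in Hlim.
  destruct (Lim_seq (sum_n a)) as [l| |]; try reflexivity.
  exfalso. apply Hdiv. exists l. exact Hlim.
Qed.

Lemma ln_Series_exp_convex (u v : nat -> R) s :
  ex_series (fun n => exp (u n)) -> ex_series (fun n => exp (v n)) -> 0 <= s <= 1 ->
  ln (Series (fun n => exp (s * u n + (1 - s) * v n)))
  <= s * ln (Series (fun n => exp (u n))) + (1 - s) * ln (Series (fun n => exp (v n))).
Proof.
  intros Hu Hv Hs.
  set (A := Series (fun n => exp (u n))). set (B := Series (fun n => exp (v n))).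
  assert (HA : 0 < A) by (apply Series_pos; auto; intros; apply exp_pos).
  assert (HB : 0 < B) by (apply Series_pos; auto; intros; apply exp_pos).
  set (E := exp (s * ln A + (1 - s) * ln B)).
  set (w := fun n => E * s / A * exp (u n) + E * (1 - s) / B * exp (v n)).
  assert (Hw : is_series w E).
  { assert (H := is_series_plus _ _ _ _
      (is_series_scal_l (E * s / A) _ _ (Series_correct _ Hu))
      (is_series_scal_l (E * (1 - s) / B) _ _ (Series_correct _ Hv))).
    assert (Hmass : E * s / A * A + E * (1 - s) / B * B = E) by (field; lra).
    rewrite <- Hmass. exact H. }
  (* weighted AM-GM after normalising both series to total mass 1 *)
  assert (Hterm : forall n, exp (s * u n + (1 - s) * v n) <= w n).
  { intros n.
    replace (s * u n + (1 - s) * v n)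
      with ((s * ln A + (1 - s) * ln B) + (s * (u n - ln A) + (1 - s) * (v n - ln B)))
      by ring.
    rewrite exp_plus. fold E. unfold w.
    assert (Eu : exp (u n - ln A) = exp (u n) / A)
      by (unfold Rminus; rewrite exp_plus, exp_Ropp, exp_ln; auto).
    assert (Ev : exp (v n - ln B) = exp (v n) / B)
      by (unfold Rminus; rewrite exp_plus, exp_Ropp, exp_ln; auto).
    assert (Hconv := exp_convex (u n - ln A) (v n - ln B) s Hs).
    rewrite Eu, Ev in Hconv.
    assert (HE : 0 < E) by apply exp_pos.
    apply (Rmult_le_compat_l E) in Hconv; [|lra].
    apply (Rle_trans _ _ _ Hconv). right. field. split; lra. }
  assert (Hex : ex_series (fun n => exp (s * u n + (1 - s) * v n))).
  { apply (@ex_series_le R_AbsRing R_CompleteNormedModule _ w); [|eexists; exact Hw].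
    intros n. unfold norm; simpl; unfold abs; simpl.
    rewrite Rabs_pos_eq by (left; apply exp_pos). apply Hterm. }
  assert (Hle : Series (fun n => exp (s * u n + (1 - s) * v n)) <= E).
  { rewrite <- (is_series_unique _ _ Hw). apply Series_le; [|eexists; exact Hw].
    intros n. split; [left; apply exp_pos | apply Hterm]. }
  apply ln_le in Hle; [|apply Series_pos; [exact Hex | intros; apply exp_pos]].
  unfold E in Hle. now rewrite ln_exp in Hle.
Qed.

Definition P_summand (t q : R) (n : nat) : R :=
  Rpower 2 (- (INR (S n)) * t) * Rpower (INR (S n)) q.

Lemma P_Series t q : P t q = ln (Series (P_summand t q)).
Proof. reflexivity. Qed.

Lemma P_summand_exp t q n :
  P_summand t q n = exp (- INR (S n) * t * ln 2 + q * ln (INR (S n))).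
Proof. unfold P_summand, Rpower. now rewrite exp_plus. Qed.

Lemma P_summand_pos t q n : 0 < P_summand t q n.
Proof. rewrite P_summand_exp. apply exp_pos. Qed.

Lemma P_summand_ratio t q n :
  P_summand t q (S n) / P_summand t q n = exp (- t * ln 2 + q * ln (1 + / INR (S n))).
Proof.
  assert (Hn := INR_S_pos n).
  unfold Rdiv. rewrite !P_summand_exp, <- exp_Ropp, <- exp_plus.
  replace (1 + / INR (S n)) with (INR (S (S n)) * / INR (S n))
    by (rewrite (S_INR (S n)); field; lra).
  rewrite ln_mult, ln_Rinv by (try apply INR_S_pos; apply Rinv_0_lt_compat, Hn).
  f_equal. rewrite (S_INR (S n)). ring.
Qed.

Lemma ex_series_P_summand t q : 0 < t -> ex_series (P_summand t q).
Proof.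
  intros Ht.
  assert (Hlim : is_lim_seq (fun n => / INR (S n)) 0).
  { apply (is_lim_seq_inv _ p_infty); [|discriminate].
    exact (proj1 (is_lim_seq_incr_1 _ _) is_lim_seq_INR). }
  set (ratio := fun x => exp (- t * ln 2 + q * ln (1 + x))).
  assert (Hc : continuity_pt ratio 0).
  { apply derivable_continuous_pt, ex_derive_Reals_0. unfold ratio. auto_derive. lra. }
  apply ex_series_Rabs, (ex_series_DAlembert _ (ratio 0)).
  - unfold ratio. rewrite Rplus_0_r, ln_1, Rmult_0_r, Rplus_0_r, <- exp_0.
    apply exp_increasing. assert (Hl2 := ln2_pos). nra.
  - intros n. apply Rgt_not_eq, P_summand_pos.
  - apply (is_lim_seq_ext (fun n => ratio (/ INR (S n)))).
    + intros n. unfold ratio.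
      rewrite P_summand_ratio, Rabs_pos_eq; [reflexivity | left; apply exp_pos].
    + exact (is_lim_seq_continuous ratio _ 0 Hc Hlim).
Qed.

Lemma P_convex t : 0 < t -> convex (P t).
Proof.
  intros Ht x y s Hs.
  set (c := fun n => - INR (S n) * t * ln 2). set (L := fun n => ln (INR (S n))).
  assert (HT : forall q, Series (P_summand t q) = Series (fun n => exp (c n + q * L n)))
    by (intros q; apply Series_ext; intros n; apply P_summand_exp).
  assert (Hex : forall q, ex_series (fun n => exp (c n + q * L n))).
  { intros q. apply (@ex_series_ext R_AbsRing R_NormedModule (P_summand t q)).
    - intros n. apply P_summand_exp.
    - now apply ex_series_P_summand. }
  rewrite !P_Series, !HT.
  rewrite (Series_ext _ (fun n => exp (s * (c n + x * L n) + (1 - s) * (c n + y * L n))))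
    by (intros n; f_equal; ring).
  now apply ln_Series_exp_convex.
Qed.

Lemma Series_P_summand_1_0 : Series (P_summand 1 0) = 1.
Proof.
  transitivity (/ 2 * / (1 - / 2)); [|field].
  apply is_series_unique, (is_series_ext (fun n => / 2 * (/ 2) ^ n)).
  - intros n. unfold P_summand.
    rewrite Rpower_O, Rmult_1_r, Rmult_1_r, Rpower_Ropp, Rpower_pow, <- pow_inv
      by (try apply INR_S_pos; lra).
    reflexivity.
  - exact (is_series_scal_l (/ 2) _ _ (is_series_geom (/ 2) ltac:(rewrite Rabs_pos_eq; lra))).
Qed.

Lemma P_1_0 : P 1 0 = 0.
Proof. now rewrite P_Series, Series_P_summand_1_0, ln_1. Qed.

(* every term grows with [s]; the term [n = 2] grows from [1/4] to
   [2 ^ s / 4 >= (1 + s ln 2) / 4] *)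
Lemma Series_P_summand_1_ge s : 0 <= s -> 1 + ln 2 / 4 * s <= Series (P_summand 1 s).
Proof.
  intros Hs.
  set (d := fun n => P_summand 1 s n - P_summand 1 0 n).
  assert (Hd : forall n, 0 <= d n).
  { intros n. unfold d. rewrite !P_summand_exp.
    assert (HL : 0 <= ln (INR (S n))).
    { rewrite <- ln_1. apply ln_le; [lra|]. rewrite S_INR. assert (Hn := pos_INR n). lra. }
    assert (Hmono : exp (- INR (S n) * 1 * ln 2 + 0 * ln (INR (S n)))
            <= exp (- INR (S n) * 1 * ln 2 + s * ln (INR (S n)))) by (apply exp_le; nra).
    lra. }
  assert (Hex : ex_series d).
  { apply (@ex_series_minus R_AbsRing R_NormedModule); apply ex_series_P_summand; lra. }
  assert (Hsum : Series d = Series (P_summand 1 s) - 1).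
  { rewrite <- Series_P_summand_1_0 at 2.
    apply Series_minus; apply ex_series_P_summand; lra. }
  assert (Hd1 : d 1%nat = (exp (s * ln 2) - 1) / 4).
  { assert (Hquarter : exp (- INR 2 * 1 * ln 2) = / 4).
    { replace (- INR 2 * 1 * ln 2) with (- ln (2 ^ 2)) by (rewrite ln_pow by lra; ring).
      rewrite exp_Ropp, exp_ln by lra. simpl. field. }
    unfold d. rewrite !P_summand_exp, !exp_plus, Rmult_0_l, exp_0, Hquarter.
    replace (INR 2) with 2 by (simpl; ring). field. }
  assert (Hterm := Series_ge_term d 1 Hex Hd).
  assert (Hexp := exp_ineq1_le (s * ln 2)).
  lra.
Qed.

Lemma P_1_slope_pos xi0 : is_derive (P 1) 0 xi0 -> 0 < xi0.
Proof.
  intros Hd.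
  (* the lower bound [Series_P_summand_1_ge] is on [exp (P 1 s)], whose slope at [0]
     is also [xi0] because [P 1 0 = 0] *)
  assert (Hexp : is_derive (fun s => exp (P 1 s)) 0 (xi0 * exp (P 1 0)))
    by exact (is_derive_comp exp (P 1) 0 _ _ (is_derive_exp _) Hd).
  rewrite P_1_0, exp_0, Rmult_1_r in Hexp.
  assert (HS : forall s, exp (P 1 s) = Series (P_summand 1 s)).
  { intros s. rewrite P_Series.
    apply exp_ln, Series_pos; [apply ex_series_P_summand; lra | apply P_summand_pos]. }
  apply (Rlt_le_trans _ (ln 2 / 4)); [assert (Hl2 := ln2_pos); lra|].
  apply (is_derive_ge_of_right_slope _ 0 _ _ Hexp).
  intros s Hs. rewrite Rplus_0_l, !HS, Series_P_summand_1_0.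
  assert (Hge := Series_P_summand_1_ge s ltac:(lra)). lra.
Qed.

Lemma P_le_of_t_le t t' q :
  0 < t' -> t <= t' -> ex_series (P_summand t q) -> P t' q <= P t q.
Proof.
  intros Ht' Htt' Hex. rewrite !P_Series.
  apply ln_le; [apply Series_pos; [apply ex_series_P_summand; lra | apply P_summand_pos]|].
  apply Series_le; [|exact Hex].
  intros n. split; [left; apply P_summand_pos|]. rewrite !P_summand_exp. apply exp_le.
  assert (Hn := INR_S_pos n). assert (Hl2 := ln2_pos).
  assert (Htt'n : INR (S n) * t * ln 2 <= INR (S n) * t' * ln 2)
    by (apply Rmult_le_compat_r; [lra | apply Rmult_le_compat_l; lra]).
  lra.
Qed.

(* [Series] is [0] on divergent series and [ln 0 = 0] *)
Lemma P_not_ex_series t q : ~ ex_series (P_summand t q) -> P t q = 0.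
Proof.
  intros Hdiv. rewrite P_Series, Series_not_ex_series; auto.
  - unfold ln. destruct (Rlt_dec 0 0) as [Hlt|]; [exfalso; lra | reflexivity].
  - intros n. left. apply P_summand_pos.
Qed.

Lemma solution_P_1_le xi t q : 0 < xi -> inDtilde t q -> solves xi t q -> P 1 q <= P t q.
Proof.
  intros Hxi [[Ht | [Ht0 Hq]] Ht1] [HP _].
  - apply P_le_of_t_le; [lra | lra | now apply ex_series_P_summand].
  - destruct (classic (ex_series (P_summand t q))) as [Hex | Hdiv].
    + apply P_le_of_t_le; [lra | lra | exact Hex].
    + rewrite P_not_ex_series in HP by exact Hdiv. nra.
Qed.

Section Solutions.

Variable xi0 : R.
Hypothesis P_1_slope : is_derive (P 1) 0 xi0.

Lemma P_1_ge_tangent q : xi0 * q <= P 1 q.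
Proof.
  assert (H := convex_ge_tangent (P 1) 0 xi0 q (P_convex 1 ltac:(lra)) P_1_slope).
  rewrite P_1_0 in H. lra.
Qed.

Lemma solution_q_0 xi t : 0 < xi -> inDtilde t 0 -> solves xi t 0 -> xi = xi0.
Proof.
  intros Hxi [[Ht | [_ Hq]] Ht1] [HP Hd]; [|lra].
  apply (is_derive_eq_of_supporting_line (P t) 0 xi xi0 Hd).
  intros x. rewrite HP, Rmult_0_l, Rplus_0_l, Rminus_0_r.
  apply (Rle_trans _ (P 1 x)); [apply P_1_ge_tangent|].
  apply P_le_of_t_le; [lra | lra | now apply ex_series_P_summand].
Qed.

Lemma solution_q_sign xi t q : 0 < xi -> inDtilde t q -> solves xi t q ->
  (xi < xi0 -> q < 0) /\ (xi0 < xi -> 0 < q).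
Proof.
  intros Hxi HD Hsolves.
  assert (Hle : xi0 * q <= q * xi).
  { rewrite <- (proj1 Hsolves).
    apply (Rle_trans _ _ _ (P_1_ge_tangent q)), (solution_P_1_le xi); assumption. }
  destruct (Req_dec q 0) as [-> | Hq0].
  - assert (Hxi0 := solution_q_0 xi t Hxi HD Hsolves). lra.
  - split; intros; nra.
Qed.

End Solutions.

Theorem proposition4p5
  (xi0 : R) (tf qf : R -> R)
  (* xi_0 = \int_0^1 log ceil(-log_2 x) dx  (improper at 0) *)
  (Hxi0 : is_RInt_gen xi0_integrand (at_right 0) (at_point 1) xi0)
  (* setting: dP/dq (1,0) = xi_0 *)
  (Hderiv : is_derive (fun s => P 1 s) 0 xi0)
  (* setting: for every xi > 0, (tf xi, qf xi) is a solution in D~ ... *)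
  (Hsol : forall xi, 0 < xi -> inDtilde (tf xi) (qf xi) /\ solves xi (tf xi) (qf xi))
  (* ... and it is the unique one *)
  (Huniq : forall xi t q, 0 < xi -> inDtilde t q -> solves xi t q ->
           t = tf xi /\ q = qf xi) :
  (forall xi, 0 < xi < xi0 -> qf xi < 0) /\
  qf xi0 = 0 /\
  (forall xi, xi0 < xi -> 0 < qf xi).
Proof.
  assert (Hxi0_pos := P_1_slope_pos xi0 Hderiv).
  assert (Hsign : forall xi, 0 < xi -> (xi < xi0 -> qf xi < 0) /\ (xi0 < xi -> 0 < qf xi)).
  { intros xi Hxi. destruct (Hsol xi Hxi) as [HD Hsolves].
    exact (solution_q_sign xi0 Hderiv xi _ _ Hxi HD Hsolves). }
  split; [|split].
  - intros xi Hxi. apply (Hsign xi); lra.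
  - symmetry. apply (Huniq xi0 1 0 Hxi0_pos).
    + split; [left |]; lra.
    + split; [rewrite P_1_0; ring | exact Hderiv].
  - intros xi Hxi. apply (Hsign xi); lra.
Qed.
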